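(* Fix a formula $A$. Let $\Gamma\{-\}$ be an annotated unary context, $\Delta$ an annotated sequent, $\Sigma$ a finite set of formulas, and suppose $\vdash^A \Gamma\{[\Diamond A^\perp_\Sigma,\Delta]\}$. Let $B\in\Sigma$. If $\Delta$ contains (at any nesting depth) no bracket annotated with $B$, then $\vdash^A \Gamma\{[\Diamond A^\perp_{\Sigma'},\Diamond B^\perp,\Delta]\}$ for some $\Sigma'\subseteq\Sigma\setminus\{B\}$ (and some annotation on $\Diamond B^\perp$).
   Context: Formulas: over a countable set of atoms $\alpha$ with duals $\alpha^\perp$, $A,B ::= \alpha \mid \alpha^\perp \mid A\land B \mid A\lor B \mid \Box A \mid \Diamond A$; negation $A^\perp$ by De Morgan duality ($(\alpha)^\perp=\alpha^\perp$, $(\alpha^\perp)^\perp=\alpha$, $\land/\lor$ dual, $(\Box A)^\perp=\Diamond A^\perp$, $(\Diamond A)^\perp=\Box A^\perp$). Annotated sequents: $\Gamma,\Delta ::= \cdot \mid \Gamma, C \mid \Gamma, \Diamond A_\Sigma \mid \Gamma,[\Delta]_B$, where $C$ is a formula not of the form $\Diamond A$, $\Sigma$ is a finite set of formulas (annotation set) and $B$ a formula (bracket annotation); sequents are taken up to exchange. Annotated unary contexts $\Gamma\{-\}$ (one hole) are defined analogously, $\Gamma\{\Delta\}$ is hole-filling, $\Gamma\{\}=\Gamma\{\cdot\}$. Annotated rules (whenever an active formula in a premise is a $\Diamond$-formula, its annotation is simply discarded): (id) $\Gamma\{\alpha^\perp,\alpha\}$, provided every $\Diamond$-formula occurrence in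 it has annotation $\emptyset$; ($\land$) from $\Gamma_1\{A\}$ and $\Gamma_2\{B\}$ infer $\Gamma\{A\land B\}$; ($\lor$) from $\Gamma\{A,B\}$ infer $\Gamma\{A\lor B\}$; ($\Box$) from $\Gamma\{[\Diamond A^\perp_\Sigma, A]_A\}$ infer $\Gamma\{\Box A\}$; ($\Diamond$) from $\Gamma\{\Delta\{[\Delta',A]_B\},\Diamond A_\Sigma\}$ infer $\Gamma\{\Delta\{[\Delta']_B\},\Diamond A_{\Sigma\cup\{B\}}\}$ (for any unary context $\Delta\{-\}$, possibly of depth $0$); (cut) from $\Gamma_1\{A\}$ and $\Gamma_2\{A^\perp\}$ infer $\Gamma\{\}$. In the two-premise rules, $\Gamma_1\{-\},\Gamma_2\{-\},\Gamma\{-\}$ are identical except for annotation sets of $\Diamond$-formula occurrences (bracket annotations coincide), and each $\Diamond$-formula occurrence in $\Gamma\{-\}$ has as annotation the union of the annotations of the corresponding occurrences in $\Gamma_1,\Gamma_2$. Fix a formula $A$; $\vdash^A\Gamma$ means the annotated sequent $\Gamma$ is derivable with the annotated rules (id), ($\land$), ($\lor$), ($\Box$), ($\Diamond$) together with those instances of (cut) whose cut formula is $A$. Convention: annotations not displayed in a statement (on $\Diamond$-formulas or brackets) are arbitrary; bracket annotations are the same in hypothesis and conclusion, while undisplayed $\Diamond$-annotations in the conclusion are existentially quantified. *)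

From Stdlib Require Import List.
Import ListNotations.

Inductive formula : Type :=
| Atom  : nat -> formula
| NAtom : nat -> formula
| And   : formula -> formula -> formula
| Or    : formula -> formula -> formula
| Box   : formula -> formula
| Dia   : formula -> formula.

Fixpoint dual (A : formula) : formula :=
  match A with
  | Atom n => NAtom n
  | NAtom n => Atom n
  | And A B => Or (dual A) (dual B)
  | Or A B => And (dual A) (dual B)
  | Box A => Dia (dual A)
  | Dia A => Box (dual A)
  end.

(* Annotation sets: finite sets of formulas, represented by lists
   (only membership matters; sequents are identified up to set equality
   of annotations, see [seq_eq]). *)
Definition annot := list formula.

(* Items of an annotated sequent.  Non-diamond formulas are the constructors
   IAtom .. IBox; [IDia A S] is the annotated formula  (Dia A)_S;
   [IBr D B] is the bracket [D]_B. *)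
Inductive item : Type :=
| IAtom  : nat -> item
| INAtom : nat -> item
| IAnd   : formula -> formula -> item
| IOr    : formula -> formula -> item
| IBox   : formula -> item
| IDia   : formula -> annot -> item
| IBr    : list item -> formula -> item.

Definition sequent := list item.

Definition mk (A : formula) (S : annot) : item :=
  match A with
  | Atom n => IAtom n
  | NAtom n => INAtom n
  | And A B => IAnd A B
  | Or A B => IOr A B
  | Box A => IBox A
  | Dia A => IDia A S
  end.

(* Annotated unary contexts: [CTop G] is  G, {-} ;  [CIn G c B] is G, [c]_B. *)
Inductive ctx : Type :=
| CTop : sequent -> ctx
| CIn  : sequent -> ctx -> formula -> ctx.

Fixpoint fill (c : ctx) (D : sequent) : sequent :=
  match c with
  | CTop G => G ++ D
  | CIn G c' B => G ++ [IBr (fill c' D) B]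
  end.

(* Equality of sequents up to exchange (at every depth) and up to set
   equality of annotation sets. *)
Inductive item_eq : item -> item -> Prop :=
| ie_refl i : item_eq i i
| ie_dia A S1 S2 : (forall x, In x S1 <-> In x S2) -> item_eq (IDia A S1) (IDia A S2)
| ie_br D1 D2 B : seq_eq D1 D2 -> item_eq (IBr D1 B) (IBr D2 B)
with seq_eq : sequent -> sequent -> Prop :=
| se_nil : seq_eq [] []
| se_cons i1 i2 D1 D2 : item_eq i1 i2 -> seq_eq D1 D2 -> seq_eq (i1 :: D1) (i2 :: D2)
| se_swap i j D : seq_eq (i :: j :: D) (j :: i :: D)
| se_trans D1 D2 D3 : seq_eq D1 D2 -> seq_eq D2 D3 -> seq_eq D1 D3.

Inductive merge_item : item -> item -> item -> Prop :=
| mi_atom n : merge_item (IAtom n) (IAtom n) (IAtom n)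
| mi_natom n : merge_item (INAtom n) (INAtom n) (INAtom n)
| mi_and A B : merge_item (IAnd A B) (IAnd A B) (IAnd A B)
| mi_or A B : merge_item (IOr A B) (IOr A B) (IOr A B)
| mi_box A : merge_item (IBox A) (IBox A) (IBox A)
| mi_dia A S1 S2 : merge_item (IDia A S1) (IDia A S2) (IDia A (S1 ++ S2))
| mi_br D1 D2 D B : merge_seq D1 D2 D -> merge_item (IBr D1 B) (IBr D2 B) (IBr D B)
with merge_seq : sequent -> sequent -> sequent -> Prop :=
| ms_nil : merge_seq [] [] []
| ms_cons i1 i2 i D1 D2 D : merge_item i1 i2 i -> merge_seq D1 D2 D ->
    merge_seq (i1 :: D1) (i2 :: D2) (i :: D).

Inductive merge_ctx : ctx -> ctx -> ctx -> Prop :=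
| mc_top G1 G2 G : merge_seq G1 G2 G -> merge_ctx (CTop G1) (CTop G2) (CTop G)
| mc_in G1 G2 G c1 c2 c B : merge_seq G1 G2 G -> merge_ctx c1 c2 c ->
    merge_ctx (CIn G1 c1 B) (CIn G2 c2 B) (CIn G c B).

Fixpoint item_empty (i : item) : Prop :=
  match i with
  | IDia _ X => X = []
  | IBr D _ => (fix go (D : sequent) : Prop :=
                  match D with [] => True | j :: D' => item_empty j /\ go D' end) D
  | _ => True
  end.
Definition all_empty (D : sequent) : Prop := forall i, In i D -> item_empty i.

(* Derivability  |-^A0 : annotated rules + cuts on the fixed formula A0. *)
Inductive der (A0 : formula) : sequent -> Prop :=
| d_id G n : all_empty (fill G [INAtom n; IAtom n]) ->
    der A0 (fill G [INAtom n; IAtom n])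
| d_and G1 G2 G A B S1 S2 : merge_ctx G1 G2 G ->
    der A0 (fill G1 [mk A S1]) -> der A0 (fill G2 [mk B S2]) ->
    der A0 (fill G [IAnd A B])
| d_or G A B S1 S2 : der A0 (fill G [mk A S1; mk B S2]) -> der A0 (fill G [IOr A B])
| d_box G A S S' : der A0 (fill G [IBr [IDia (dual A) S; mk A S'] A]) ->
    der A0 (fill G [IBox A])
| d_dia G D D' A B S S' :
    der A0 (fill G (fill D [IBr (D' ++ [mk A S']) B] ++ [IDia A S])) ->
    der A0 (fill G (fill D [IBr D' B] ++ [IDia A (B :: S)]))
| d_cut G1 G2 G S1 S2 : merge_ctx G1 G2 G ->
    der A0 (fill G1 [mk A0 S1]) -> der A0 (fill G2 [mk (dual A0) S2]) ->
    der A0 (fill G [])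
| d_exch D1 D2 : seq_eq D1 D2 -> der A0 D1 -> der A0 D2.

Fixpoint erase_item (i : item) : item :=
  match i with
  | IDia A _ => IDia A []
  | IBr D B => IBr ((fix go (D : sequent) : sequent :=
                      match D with [] => [] | j :: D' => erase_item j :: go D' end) D) B
  | j => j
  end.
Definition erase_seq (D : sequent) : sequent := map erase_item D.
Fixpoint erase_ctx (c : ctx) : ctx :=
  match c with
  | CTop G => CTop (erase_seq G)
  | CIn G c' B => CIn (erase_seq G) (erase_ctx c') B
  end.

Fixpoint item_has_br (B : formula) (i : item) : Prop :=
  match i with
  | IBr D B' => B' = B \/
      (fix go (D : sequent) : Prop :=
         match D with [] => False | j :: D' => item_has_br B j \/ go D' end) D
  | _ => False
  end.
Definition has_br (B : formula) (D : sequent) : Prop := exists i, In i D /\ item_has_br B i.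

From Stdlib Require Import List Permutation Lia.
Import ListNotations.

(* Call [Y] a B-insertion of [X] when [Y] arises from [X] by placing a new formula [◇B⊥]
   in front of some brackets containing no bracket annotated [B], and by shrinking
   diamond annotations so that those beside an inserted [◇B⊥] avoid [B].  By induction
   on derivations, a B-insertion of a derivable sequent is derivable for suitable
   annotations: every rule instance is copied into the insertion, except the two that
   would put [B] into an annotation beside an inserted [◇B⊥].  A diamond rule doing so
   needs a bracket annotated [B] there, which the invariant excludes; a box rule for
   [□B] would create one, so [□B] is instead derived directly from the inserted [◇B⊥]
   by the diamond rule and an identity expansion of [B].  The theorem is the case of a
   single insertion into the bracket holding [◇A⊥_Σ]. *)

Section ItemInduction.
Variable P : item -> Prop.
Hypotheses (P_atom : forall n, P (IAtom n)) (P_natom : forall n, P (INAtom n))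
  (P_and : forall F G, P (IAnd F G)) (P_or : forall F G, P (IOr F G))
  (P_box : forall F, P (IBox F)) (P_dia : forall F S, P (IDia F S))
  (P_br : forall D C, Forall P D -> P (IBr D C)).

Fixpoint item_forall_ind (i : item) : P i :=
  match i with
  | IAtom n => P_atom n
  | INAtom n => P_natom n
  | IAnd F G => P_and F G
  | IOr F G => P_or F G
  | IBox F => P_box F
  | IDia F Sx => P_dia F Sx
  | IBr D C => P_br D C ((fix go (D : list item) : Forall P D :=
       match D with [] => Forall_nil P | x :: l => Forall_cons x (item_forall_ind x) (go l) end) D)
  end.
End ItemInduction.

Lemma dual_involutive F : dual (dual F) = F.
Proof. induction F; simpl; congruence. Qed.

Lemma formula_eq_dec (x y : formula) : {x = y} + {x <> y}.
Proof. decide equality; apply PeanoNat.Nat.eq_dec. Qed.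

Lemma app_inv_length {X : Type} (l1 l2 m1 m2 : list X) : l1 ++ l2 = m1 ++ m2 -> length l1 = length m1 ->
  l1 = m1 /\ l2 = m2.
Proof. revert m1; induction l1; destruct m1; simpl; intros; try discriminate; auto.
  injection H as -> H. destruct (IHl1 m1); auto; subst; auto. Qed.

Lemma erase_item_br D C : erase_item (IBr D C) = IBr (erase_seq D) C.
Proof. reflexivity. Qed.

Lemma erase_item_dia F S : erase_item (IDia F S) = IDia F [].
Proof. reflexivity. Qed.

Lemma erase_seq_cons x l : erase_seq (x :: l) = erase_item x :: erase_seq l.
Proof. reflexivity. Qed.

Lemma erase_seq_app l1 l2 : erase_seq (l1 ++ l2) = erase_seq l1 ++ erase_seq l2.
Proof. apply map_app. Qed.

Lemma erase_seq_length l : length (erase_seq l) = length l.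
Proof. apply length_map. Qed.

Lemma erase_item_idem x : erase_item (erase_item x) = erase_item x.
Proof.
  induction x using item_forall_ind; try reflexivity.
  rewrite !erase_item_br. f_equal. unfold erase_seq. rewrite map_map. apply map_ext_Forall. exact H.
Qed.

Lemma erase_seq_idem l : erase_seq (erase_seq l) = erase_seq l.
Proof. unfold erase_seq. rewrite map_map. apply map_ext. apply erase_item_idem. Qed.

Lemma erase_mk_nil F : erase_item (mk F []) = mk F [].
Proof. destruct F; reflexivity. Qed.

Lemma erase_br_inv y L C : erase_item y = IBr L C -> exists Dy, y = IBr Dy C /\ erase_seq Dy = L.
Proof. destruct y; simpl; intro H; try discriminate.
  rewrite <- erase_item_br in H. rewrite erase_item_br in H. injection H; intros; subst. eauto. Qed.

Lemma erase_dia_inv y F : erase_item y = IDia F [] -> exists S, y = IDia F S.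
Proof. destruct y; simpl; intro H; try discriminate. injection H; intros; subst; eauto. Qed.

Lemma erase_mk_inv y F S : erase_item y = erase_item (mk F S) -> exists S', y = mk F S'.
Proof. destruct F; destruct y; simpl; intro H; try discriminate; injection H; intros; subst;
  try (exists []; reflexivity); eauto. Qed.

Lemma erase_seq_app_inv Y l1 l2 : erase_seq Y = l1 ++ l2 ->
  exists Y1 Y2, Y = Y1 ++ Y2 /\ erase_seq Y1 = l1 /\ erase_seq Y2 = l2.
Proof. apply map_eq_app. Qed.

Lemma erase_single_mk_inv Q F S : erase_seq Q = erase_seq [mk F S] -> exists T, Q = [mk F T].
Proof. intro H. destruct Q as [|q [|]]; try discriminate. injection H as H. apply erase_mk_inv in H.
  destruct H as [T ->]; eauto. Qed.

Lemma erase_single_br_inv Q L C : erase_seq Q = erase_seq [IBr L C] -> exists W, Q = [IBr W C] /\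
  erase_seq W = erase_seq L.
Proof. intro H. destruct Q as [|q [|]]; try discriminate. rewrite !erase_seq_cons, erase_item_br in H.
injection H as H.
  destruct (erase_br_inv _ _ _ H) as [W [-> HW]]. eauto. Qed.

Lemma erase_dia_mk_inv W F S G S' : erase_seq W = erase_seq [IDia F S; mk G S'] ->
  exists T T', W = [IDia F T; mk G T'].
Proof. intro H. destruct W as [|w1 [|w2 [|]]]; try discriminate. injection H as H1 H2.
  destruct (erase_dia_inv _ _ H1) as [T ->].
  destruct (erase_mk_inv _ _ _ H2) as [T' ->]. eauto. Qed.

Lemma item_has_br_br B D C : item_has_br B (IBr D C) <-> C = B \/ has_br B D.
Proof.
  simpl. unfold has_br. split.
  - intros [H|H]; [left; auto|right]. induction D; simpl in *; [contradiction|].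
    destruct H as [H|H]; [exists a; auto|]. destruct (IHD H) as [i [Hi Hb]]. exists i; auto.
  - intros [H|[i [Hi Hb]]]; [left; auto|right]. induction D; simpl in *; [contradiction|].
    destruct Hi as [->|Hi]; [left; auto | right; exact (IHD Hi)].
Qed.

Lemma has_br_nil B : ~ has_br B [].
Proof. intros [i [[] _]]. Qed.

Lemma has_br_cons B x l : has_br B (x :: l) <-> item_has_br B x \/ has_br B l.
Proof.
  unfold has_br; simpl; split.
  - intros [i [[->|Hi] Hb]]; [left; auto|right; eauto].
  - intros [H|[i [Hi Hb]]]; eauto.
Qed.

Lemma has_br_app B l1 l2 : has_br B (l1 ++ l2) <-> has_br B l1 \/ has_br B l2.
Proof.
  unfold has_br; split.
  - intros [i [Hi Hb]]. apply in_app_or in Hi. destruct Hi; [left|right]; eauto.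
  - intros [[i [Hi Hb]]|[i [Hi Hb]]]; exists i; split; auto; apply in_or_app; auto.
Qed.

Lemma item_has_br_erase B x : item_has_br B (erase_item x) <-> item_has_br B x.
Proof.
  induction x using item_forall_ind; try (simpl; tauto).
  rewrite erase_item_br, !item_has_br_br.
  enough (has_br B (erase_seq D) <-> has_br B D) by tauto.
  induction H as [|x l Hx _ IH].
  - tauto.
  - rewrite erase_seq_cons, !has_br_cons, Hx, IH. tauto.
Qed.

Lemma has_br_erase B l : has_br B (erase_seq l) <-> has_br B l.
Proof.
  induction l as [|x l IH].
  - tauto.
  - rewrite erase_seq_cons, !has_br_cons, item_has_br_erase, IH. tauto.
Qed.

Lemma has_br_erase_eq B l1 l2 : erase_seq l1 = erase_seq l2 -> (has_br B l1 <-> has_br B l2).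
Proof. intro H. rewrite <- (has_br_erase B l1), H, has_br_erase. tauto. Qed.

Lemma mk_no_br B F S : ~ item_has_br B (mk F S).
Proof. destruct F; simpl; auto. Qed.

Lemma no_br_single_mk B F S : ~ has_br B [mk F S].
Proof. rewrite has_br_cons. pose proof (has_br_nil B). pose proof (mk_no_br B F S). tauto. Qed.

Lemma has_br_br_snoc B D' C F S : has_br B [IBr (D' ++ [mk F S]) C] -> has_br B [IBr D' C].
Proof. intros Hh. apply has_br_cons in Hh. destruct Hh as [Hh|Hh]; [|destruct (has_br_nil _ Hh)].
  apply has_br_cons. left. apply item_has_br_br in Hh. apply item_has_br_br.
  destruct Hh as [Hh|Hh]; auto. right. apply has_br_app in Hh. destruct Hh as [Hh|Hh]; auto.
  destruct (no_br_single_mk _ _ _ Hh). Qed.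

Lemma no_br_br_snoc B D' C F S : ~ has_br B [IBr D' C] -> ~ has_br B [IBr (D' ++ [mk F S]) C].
Proof. intros H Hh. apply H. eapply has_br_br_snoc; eauto. Qed.

Lemma item_empty_br D C : item_empty (IBr D C) <-> all_empty D.
Proof.
  unfold all_empty; simpl. induction D; simpl; split; intros; try tauto.
  - destruct H0 as [->|H0]; [tauto|]. apply IHD; tauto.
  - split; [auto|]. apply IHD; auto.
Qed.

Lemma item_empty_erase x : item_empty (erase_item x).
Proof.
  induction x using item_forall_ind; try (simpl; auto; fail).
  rewrite erase_item_br, item_empty_br. intros i Hi.
  apply in_map_iff in Hi. destruct Hi as [y [<- Hy]]. rewrite Forall_forall in H. auto.
Qed.

Lemma all_empty_erase l : all_empty (erase_seq l).
Proof. intros i Hi. apply in_map_iff in Hi. destruct Hi as [x [<- _]]. apply item_empty_erase. Qed.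

Definition ctx_prefix (G : sequent) (c : ctx) : ctx :=
  match c with CTop L => CTop (G ++ L) | CIn L c' C => CIn (G ++ L) c' C end.

Definition ctx_cons (x : item) (c : ctx) : ctx := ctx_prefix [x] c.

Fixpoint ctx_comp (H c : ctx) : ctx :=
  match H with CTop G => ctx_prefix G c | CIn G H' C => CIn G (ctx_comp H' c) C end.

Lemma fill_ctx_prefix G c P : fill (ctx_prefix G c) P = G ++ fill c P.
Proof. destruct c; simpl; rewrite app_assoc; auto. Qed.

Lemma fill_ctx_cons x c P : fill (ctx_cons x c) P = x :: fill c P.
Proof. unfold ctx_cons. rewrite fill_ctx_prefix. auto. Qed.

Lemma fill_ctx_comp H c P : fill (ctx_comp H c) P = fill H (fill c P).
Proof. induction H; simpl. apply fill_ctx_prefix. rewrite IHctx. auto. Qed.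

Lemma ctx_cons_inj x y c d : ctx_cons x c = ctx_cons y d -> x = y /\ c = d.
Proof.
  destruct c, d; unfold ctx_cons, ctx_prefix; simpl; intro H; try discriminate;
    injection H; intros; subst; auto.
Qed.

Lemma erase_fill c P : erase_seq (fill c P) = fill (erase_ctx c) (erase_seq P).
Proof. induction c; cbn [fill erase_ctx]; rewrite erase_seq_app; auto.
  rewrite erase_seq_cons, erase_item_br, IHc. reflexivity. Qed.

Lemma erase_ctx_prefix G c : erase_ctx (ctx_prefix G c) = ctx_prefix (erase_seq G) (erase_ctx c).
Proof. destruct c; simpl; rewrite erase_seq_app; auto. Qed.

Lemma erase_ctx_cons x c : erase_ctx (ctx_cons x c) = ctx_cons (erase_item x) (erase_ctx c).
Proof. apply erase_ctx_prefix. Qed.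

Lemma erase_ctx_comp H c : erase_ctx (ctx_comp H c) = ctx_comp (erase_ctx H) (erase_ctx c).
Proof. induction H; simpl. apply erase_ctx_prefix. rewrite IHctx; auto. Qed.

Lemma erase_ctx_idem c : erase_ctx (erase_ctx c) = erase_ctx c.
Proof. induction c; simpl; rewrite erase_seq_idem; congruence. Qed.

Lemma erase_fill_inv c P Y : erase_seq Y = erase_seq (fill c P) ->
  exists c1 Q, Y = fill c1 Q /\ erase_ctx c1 = erase_ctx c /\ erase_seq Q = erase_seq P.
Proof.
  revert Y. induction c; intros Y H; cbn [fill] in H; rewrite erase_seq_app in H.
  - apply erase_seq_app_inv in H. destruct H as [Y1 [Y2 [-> [H1 H2]]]].
    exists (CTop Y1), Y2. simpl. rewrite H1. auto.
  - apply erase_seq_app_inv in H. destruct H as [Y1 [Y2 [-> [H1 H2]]]].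
    rewrite erase_seq_cons, erase_item_br in H2.
    destruct Y2 as [|y [|]]; try discriminate. rewrite erase_seq_cons in H2. injection H2 as H3.
    destruct (erase_br_inv _ _ _ H3) as [Dy [-> HD]].
    destruct (IHc _ HD) as [c1 [Q [-> [Hc HQ]]]].
    exists (CIn Y1 c1 f), Q. simpl. rewrite H1, Hc. auto.
Qed.

Lemma erase_ctx_cons_inv c1 x c0 : erase_ctx c1 = erase_ctx (ctx_cons x c0) ->
  exists y c1', c1 = ctx_cons y c1' /\ erase_item y = erase_item x /\ erase_ctx c1' = erase_ctx c0.
Proof. intro H. rewrite erase_ctx_cons in H. unfold ctx_cons, ctx_prefix in H.
  destruct c0 as [G0|G0 c0 C0]; destruct c1 as [G1|G1 c1 C1]; cbn [erase_ctx app] in H; try discriminate.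
  - injection H as H. destruct G1 as [|y G1]; try discriminate. rewrite erase_seq_cons in H.
    injection H as H1 H2. exists y, (CTop G1). cbn. rewrite H2. auto.
  - injection H as H H' H''. destruct G1 as [|y G1]; try discriminate. rewrite erase_seq_cons in H.
    injection H as H1 H2. exists y, (CIn G1 c1 C1). cbn. rewrite H2, H', H''. auto. Qed.

Definition ctx_top_size (c : ctx) : nat := match c with CTop G => length G | CIn G _ _ => length G end.

Lemma erase_ctx_top_size c1 c2 : erase_ctx c1 = erase_ctx c2 -> ctx_top_size c1 = ctx_top_size c2.
Proof. destruct c1, c2; simpl; intro H; try discriminate; injection H; intros;
  rewrite <- (length_map erase_item s), <- (length_map erase_item s0); unfold erase_seq in *; congruence. Qed.

Lemma ctx_top_size_cons x c : ctx_top_size (ctx_cons x c) = S (ctx_top_size c).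
Proof. destruct c; reflexivity. Qed.

Lemma fill_has_br_mono B D L1 L2 : has_br B (fill D L1) -> (has_br B L1 -> has_br B L2) ->
  has_br B (fill D L2).
Proof. induction D; cbn [fill]; intros H Himp; apply has_br_app in H; apply has_br_app.
  - destruct H; auto.
  - destruct H as [H|H]; auto. right. apply has_br_cons in H. apply has_br_cons.
    destruct H as [H|H]; [|destruct (has_br_nil _ H)]. left. apply item_has_br_br in H. apply item_has_br_br.
    destruct H; auto. Qed.

Lemma fill_has_br B D L : has_br B L -> has_br B (fill D L).
Proof. induction D; cbn [fill]; intro H; apply has_br_app; right; auto.
  apply has_br_cons. left. apply item_has_br_br. right. auto. Qed.

Lemma no_br_dia_premise B D D' C F S' x S : ~ has_br B (fill D [IBr D' C] ++ [x]) ->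
  ~ has_br B (fill D [IBr (D' ++ [mk F S']) C] ++ [IDia F S]).
Proof. intros H Hh. apply H. apply has_br_app in Hh. apply has_br_app.
  destruct Hh as [Hh|Hh]; [left|].
  - eapply fill_has_br_mono; eauto. apply has_br_br_snoc.
  - exfalso. apply has_br_cons in Hh. destruct Hh as [[]|Hh]. apply (has_br_nil _ Hh). Qed.

Fixpoint ctx_no_br (B : formula) (c : ctx) : Prop :=
  match c with CTop G => ~ has_br B G | CIn G c' C => ~ has_br B G /\ C <> B /\ ctx_no_br B c' end.

Lemma no_br_fill B c P : ~ has_br B (fill c P) <-> ctx_no_br B c /\ ~ has_br B P.
Proof. induction c; cbn [fill ctx_no_br]; rewrite has_br_app.
  - tauto.
  - rewrite has_br_cons, item_has_br_br. assert (~ has_br B []) by apply has_br_nil. tauto. Qed.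

Lemma ctx_no_br_erase B c1 c : erase_ctx c1 = erase_ctx c -> ctx_no_br B c -> ctx_no_br B c1.
Proof. revert c1; induction c; destruct c1; cbn; intros H; try discriminate; injection H; intros.
  - intro Hc; apply (has_br_erase_eq B s0 s H0) in Hc; auto.
  - destruct H3 as [? [? ?]]. subst. repeat split; auto.
    intro Hc; apply (has_br_erase_eq B s0 s H2) in Hc; auto. Qed.

Lemma seq_eq_app_l G L1 L2 : seq_eq L1 L2 -> seq_eq (G ++ L1) (G ++ L2).
Proof. induction G; simpl; auto. intro; apply se_cons; auto. apply ie_refl. Qed.

Lemma seq_eq_fill c L1 L2 : seq_eq L1 L2 -> seq_eq (fill c L1) (fill c L2).
Proof. induction c; simpl; intro H. apply seq_eq_app_l; auto.
  apply seq_eq_app_l. apply se_cons; [|apply se_nil]. apply ie_br. auto. Qed.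

Lemma perm_seq_eq L1 L2 : Permutation L1 L2 -> seq_eq L1 L2.
Proof. induction 1. apply se_nil. apply se_cons; [apply ie_refl|auto]. apply se_swap.
eapply se_trans; eauto. Qed.

Scheme item_eq_mut := Induction for item_eq Sort Prop
  with seq_eq_mut := Induction for seq_eq Sort Prop.
Combined Scheme eq_mut from item_eq_mut, seq_eq_mut.

Lemma seq_eq_br_mut B : (forall i j, item_eq i j -> (item_has_br B i <-> item_has_br B j)) /\
  (forall D1 D2, seq_eq D1 D2 -> (has_br B D1 <-> has_br B D2)).
Proof. pose proof (has_br_nil B). apply eq_mut; intros; try tauto; try (simpl; tauto);
  try (rewrite !item_has_br_br; tauto); try (rewrite !has_br_cons; tauto). Qed.

Lemma seq_eq_br B D1 D2 : seq_eq D1 D2 -> (has_br B D1 <-> has_br B D2).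
Proof. apply seq_eq_br_mut. Qed.

Lemma der_exch_fill A c L1 L2 : seq_eq L1 L2 -> der A (fill c L1) -> der A (fill c L2).
Proof. intros H1 H2. eapply d_exch; eauto. apply seq_eq_fill; auto. Qed.

Lemma der_perm_fill A c L1 L2 : Permutation L1 L2 -> der A (fill c L1) -> der A (fill c L2).
Proof. intros; eapply der_exch_fill; eauto. apply perm_seq_eq; auto. Qed.

Scheme merge_item_mut := Induction for merge_item Sort Prop
  with merge_seq_mut := Induction for merge_seq Sort Prop.
Combined Scheme merge_mut from merge_item_mut, merge_seq_mut.

Lemma merge_erase_mut :
  (forall x1 x2 x, merge_item x1 x2 x ->
    erase_item x = erase_item x1 /\ erase_item x2 = erase_item x1) /\
  (forall l1 l2 l, merge_seq l1 l2 l -> erase_seq l = erase_seq l1 /\ erase_seq l2 = erase_seq l1).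
Proof. apply merge_mut; intros; auto.
  - destruct H. rewrite !erase_item_br. split; congruence.
  - destruct H, H0. rewrite !erase_seq_cons. split; congruence. Qed.

Lemma merge_seq_erase l1 l2 l : merge_seq l1 l2 l -> erase_seq l = erase_seq l1 /\
  erase_seq l2 = erase_seq l1.
Proof. apply merge_erase_mut. Qed.

Lemma merge_seq_len l1 l2 l : merge_seq l1 l2 l -> length l = length l1 /\ length l2 = length l1.
Proof. intro H. apply merge_seq_erase in H. destruct H as [H1 H2].
  rewrite <- (erase_seq_length l), H1, <- (erase_seq_length l2), H2, erase_seq_length. auto. Qed.

Lemma merge_ctx_erase c1 c2 c : merge_ctx c1 c2 c -> erase_ctx c = erase_ctx c1 /\
  erase_ctx c2 = erase_ctx c1.
Proof. induction 1; cbn; apply merge_seq_erase in H; destruct H.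
  - split; congruence.
  - destruct IHmerge_ctx. split; congruence. Qed.

Lemma merge_ctx_top_size c1 c2 c : merge_ctx c1 c2 c -> ctx_top_size c2 = ctx_top_size c1.
Proof. intro H. apply merge_ctx_erase in H. destruct H. apply erase_ctx_top_size; auto. Qed.

Lemma merge_seq_app a1 a2 a b1 b2 b : merge_seq a1 a2 a -> merge_seq b1 b2 b ->
  merge_seq (a1 ++ b1) (a2 ++ b2) (a ++ b).
Proof. induction 1; simpl; auto. intro; constructor; auto. Qed.

Lemma merge_ctx_cons x1 x2 x c1 c2 c : merge_item x1 x2 x -> merge_ctx c1 c2 c ->
  merge_ctx (ctx_cons x1 c1) (ctx_cons x2 c2) (ctx_cons x c).
Proof. intros Hx Hc. destruct Hc; unfold ctx_cons, ctx_prefix; simpl; constructor; try constructor; auto. Qed.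

Lemma merge_mk F S1 S2 : merge_item (mk F S1) (mk F S2) (mk F (S1 ++ S2)).
Proof. destruct F; constructor. Qed.

Lemma merge_item_erase_self x : merge_item (erase_item x) (erase_item x) (erase_item x).
Proof.
  induction x using item_forall_ind; try (constructor; fail).
  rewrite erase_item_br. constructor. induction H; constructor; auto.
Qed.

Lemma merge_self l : merge_seq (erase_seq l) (erase_seq l) (erase_seq l).
Proof. induction l; constructor; auto using merge_item_erase_self. Qed.

Lemma merge_ctx_comp_erase H0 c1 c2 c : merge_ctx c1 c2 c ->
  merge_ctx (ctx_comp (erase_ctx H0) c1) (ctx_comp (erase_ctx H0) c2) (ctx_comp (erase_ctx H0) c).
Proof. induction H0; simpl; intro Hm.
  - destruct Hm; simpl; constructor; try apply merge_seq_app; auto using merge_self.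
  - constructor; auto. apply merge_self. Qed.

Definition expands A0 F :=
  forall H, exists S1 S2, der A0 (fill (erase_ctx H) [mk F S1; mk (dual F) S2]).

Lemma expands_dual A0 F : expands A0 F -> expands A0 (dual F).
Proof.
  intros HF H. destruct (HF H) as [S1 [S2 HD]]. exists S2, S1. rewrite dual_involutive.
  eapply der_perm_fill; [apply perm_swap | exact HD].
Qed.

Lemma expands_natom A0 n : expands A0 (NAtom n).
Proof.
  intro H. exists [], []. apply d_id.
  change [INAtom n; IAtom n] with (erase_seq [INAtom n; IAtom n]).
  rewrite <- erase_fill. apply all_empty_erase.
Qed.

Lemma expands_and A0 F1 F2 : expands A0 F1 -> expands A0 F2 -> expands A0 (And F1 F2).
Proof.
  intros HF1 HF2 H0.
  destruct (HF1 (ctx_comp H0 (CTop [mk (dual F2) []]))) as [U1 [U2 HU]].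
  destruct (HF2 (ctx_comp H0 (CTop [mk (dual F1) []]))) as [V1 [V2 HV]].
  rewrite erase_ctx_comp, fill_ctx_comp in HU, HV. cbn [erase_ctx fill erase_seq map app] in HU, HV.
  rewrite erase_mk_nil in HU, HV.
  exists [], []. cbn [mk dual].
  replace (fill (erase_ctx H0) [IAnd F1 F2; IOr (dual F1) (dual F2)]) with
    (fill (ctx_comp (erase_ctx H0) (CTop [IAnd F1 F2])) [IOr (dual F1) (dual F2)])
    by (rewrite fill_ctx_comp; reflexivity).
  apply (d_or _ _ _ _ (U2 ++ []) ([] ++ V2)). rewrite fill_ctx_comp. cbn [fill app].
  apply (der_perm_fill _ _ ([mk (dual F1) (U2 ++ []); mk (dual F2) ([] ++ V2)] ++ [IAnd F1 F2])).
  { apply Permutation_sym, Permutation_cons_append. }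
  replace (fill (erase_ctx H0) ([mk (dual F1) (U2 ++ []); mk (dual F2) ([] ++ V2)] ++ [IAnd F1 F2])) with
    (fill (ctx_comp (erase_ctx H0) (CTop [mk (dual F1) (U2 ++ []); mk (dual F2) ([] ++ V2)])) [IAnd F1 F2])
    by (rewrite fill_ctx_comp; reflexivity).
  apply (d_and _ (ctx_comp (erase_ctx H0) (CTop [mk (dual F1) U2; mk (dual F2) []]))
                 (ctx_comp (erase_ctx H0) (CTop [mk (dual F1) []; mk (dual F2) V2])) _ F1 F2 U1 V1).
  - apply merge_ctx_comp_erase. repeat constructor; apply merge_mk.
  - rewrite fill_ctx_comp. cbn [fill app].
    apply (der_perm_fill _ _ [mk (dual F2) []; mk F1 U1; mk (dual F1) U2]); auto.
    apply Permutation_sym. apply (Permutation_cons_append [mk (dual F2) []; mk F1 U1] (mk (dual F1) U2)).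
  - rewrite fill_ctx_comp. cbn [fill app].
    apply (der_perm_fill _ _ [mk (dual F1) []; mk F2 V1; mk (dual F2) V2]); auto.
    apply perm_skip, perm_swap.
Qed.

Lemma expands_box A0 F : expands A0 F -> expands A0 (Box F).
Proof.
  intros HF H0.
  destruct (HF (ctx_comp H0 (CIn [IDia (dual F) []] (CTop [IDia (dual F) []]) F))) as [U1 [U2 HU]].
  rewrite erase_ctx_comp, fill_ctx_comp in HU. cbn [erase_ctx fill erase_seq map app erase_item] in HU.
  exists [], [F]. cbn [mk dual].
  apply (der_perm_fill _ _ [IDia (dual F) [F]; IBox F]); [apply perm_swap|].
  replace (fill (erase_ctx H0) [IDia (dual F) [F]; IBox F]) with
    (fill (ctx_comp (erase_ctx H0) (CTop [IDia (dual F) [F]])) [IBox F])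
      by (rewrite fill_ctx_comp; reflexivity).
  apply (d_box _ _ _ [] U1). rewrite fill_ctx_comp. cbn [fill app].
  apply (der_perm_fill _ _ [IBr [IDia (dual F) []; mk F U1] F; IDia (dual F) [F]]); [apply perm_swap|].
  apply (d_dia _ (erase_ctx H0) (CTop []) [IDia (dual F) []; mk F U1] (dual F) F [] U2).
  cbn [fill app].
  apply (der_perm_fill _ _ [IDia (dual F) []; IBr [IDia (dual F) []; mk F U1; mk (dual F) U2] F]);
    [apply perm_swap|].
  exact HU.
Qed.

Lemma expands_all A0 F : expands A0 F.
Proof.
  induction F.
  - change (Atom n) with (dual (NAtom n)). apply expands_dual, expands_natom.
  - apply expands_natom.
  - apply expands_and; assumption.
  - replace (Or F1 F2) with (dual (And (dual F1) (dual F2)))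
      by (simpl; rewrite !dual_involutive; reflexivity).
    apply expands_dual, expands_and; apply expands_dual; assumption.
  - apply expands_box; assumption.
  - replace (Dia F) with (dual (Box (dual F))) by (simpl; rewrite dual_involutive; reflexivity).
    apply expands_dual, expands_box, expands_dual; assumption.
Qed.

(* [ins_item B g x y]: [y] is a B-insertion of [x]; [g] is [Guarded] for the items
   beside an inserted [◇B⊥], whose annotations must avoid [B]. *)
Inductive guard := Unguarded | Guarded.

Definition annot_ok (B : formula) (m : guard) (S T : annot) : Prop :=
  (forall x, In x T -> In x S) /\ (m = Guarded -> ~ In B T).

Inductive ins_item (B : formula) : guard -> item -> item -> Prop :=
| ins_atom m n : ins_item B m (IAtom n) (IAtom n)
| ins_natom m n : ins_item B m (INAtom n) (INAtom n)
| ins_and m F1 F2 : ins_item B m (IAnd F1 F2) (IAnd F1 F2)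
| ins_or m F1 F2 : ins_item B m (IOr F1 F2) (IOr F1 F2)
| ins_box m F : ins_item B m (IBox F) (IBox F)
| ins_dia m F S T : annot_ok B m S T -> ins_item B m (IDia F S) (IDia F T)
| ins_br m Z Z' C : ins_seq B Unguarded Z Z' -> ins_item B m (IBr Z C) (IBr Z' C)
| ins_insert m Z Z' C SB : ins_seq B Guarded Z Z' -> ~ has_br B Z ->
    ins_item B m (IBr Z C) (IBr (IDia (dual B) SB :: Z') C)
with ins_seq (B : formula) : guard -> list item -> list item -> Prop :=
| ins_nil m : ins_seq B m [] []
| ins_cons m x y l l' : ins_item B m x y -> ins_seq B m l l' -> ins_seq B m (x :: l) (y :: l').

Scheme ins_item_mut := Induction for ins_item Sort Prop
  with ins_seq_mut := Induction for ins_seq Sort Prop.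
Combined Scheme ins_mut from ins_item_mut, ins_seq_mut.

Lemma ins_seq_length B m l l' : ins_seq B m l l' -> length l' = length l.
Proof. induction 1; simpl; auto. Qed.

Lemma ins_seq_app B m l1 l2 Y1 Y2 : ins_seq B m l1 Y1 -> ins_seq B m l2 Y2 ->
  ins_seq B m (l1 ++ l2) (Y1 ++ Y2).
Proof. induction 1; simpl; auto. intro; constructor; auto. Qed.

Lemma ins_seq_app_inv B m l1 l2 Y : ins_seq B m (l1 ++ l2) Y ->
  exists Y1 Y2, Y = Y1 ++ Y2 /\ ins_seq B m l1 Y1 /\ ins_seq B m l2 Y2.
Proof. revert Y; induction l1; simpl; intros Y H.
  - exists [], Y; repeat split; auto. constructor.
  - inversion H; subst. destruct (IHl1 _ H5) as [Y1 [Y2 [-> [H1 H2]]]].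
    exists (y :: Y1), Y2; repeat split; auto. constructor; auto. Qed.

Lemma ins_seq_app_inv_length B m l1 l2 Y1 Y2 : ins_seq B m (l1 ++ l2) (Y1 ++ Y2) -> length Y1 = length l1 ->
  ins_seq B m l1 Y1 /\ ins_seq B m l2 Y2.
Proof. intros H Hl. destruct (ins_seq_app_inv _ _ _ _ _ H) as [Z1 [Z2 [HE [H1 H2]]]].
  pose proof (ins_seq_length _ _ _ _ H1) as L1. apply app_inv_length in HE; [|congruence].
  destruct HE as [E1 E2]. rewrite E1, E2; auto. Qed.

Lemma ins_seq_cons_inv B m x l Y : ins_seq B m (x :: l) Y -> exists y Y', Y = y :: Y' /\
  ins_item B m x y /\ ins_seq B m l Y'.
Proof. intro H; inversion H; subst; eauto. Qed.

Lemma ins_seq_mk B m F S : ins_seq B m [mk F S] [mk F []].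
Proof. constructor; [|constructor]. destruct F; try constructor. split; [intros _ []|intros _ []]. Qed.

Lemma ins_item_plain B m x y : ins_item B m x y -> match x with IDia _ _ | IBr _ _ => True | _ => y = x end.
Proof. destruct 1; auto. Qed.

Lemma ins_dia_inv B m F S y : ins_item B m (IDia F S) y -> exists T, y = IDia F T /\ annot_ok B m S T.
Proof. intro H; inversion H; subst; eauto. Qed.

Lemma ins_br_inv B m Z C y : ins_item B m (IBr Z C) y ->
  (exists Z', y = IBr Z' C /\ ins_seq B Unguarded Z Z') \/
  (exists SB Z', y = IBr (IDia (dual B) SB :: Z') C /\ ins_seq B Guarded Z Z' /\ ~ has_br B Z).
Proof. intro H; inversion H; subst; [left|right]; eauto 6. Qed.

Lemma ins_br_shape B m D C q : ins_item B m (IBr D C) q -> exists W, q = IBr W C.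
Proof. intro H; apply ins_br_inv in H; destruct H as [[Z [-> _]]|[SB [Z [-> _]]]]; eauto. Qed.

Lemma ins_br_snoc B m D' x C W mA :
  ins_item B m (IBr D' C) (IBr W C) -> ins_item B m (IBr (D' ++ [mk x mA]) C) (IBr (W ++ [mk x []]) C).
Proof. intro H. apply ins_br_inv in H. destruct H as [[Z [HZ HR]]|[SB [Z [HZ [HR Hn]]]]]; injection HZ as ->.
  - apply ins_br. apply ins_seq_app; auto. apply ins_seq_mk.
  - simpl. apply ins_insert. apply ins_seq_app; auto. apply ins_seq_mk.
    intro Hc. apply has_br_app in Hc. destruct Hc as [Hc|Hc]; auto. apply has_br_cons in Hc.
    destruct Hc as [Hc|Hc]. apply (mk_no_br _ _ _ Hc). apply (has_br_nil _ Hc).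
Qed.

Lemma ins_br_snoc_inv B m D' x C W W1 w : ins_item B m (IBr D' C) (IBr W C) -> erase_seq W1 = erase_seq W ->
  ins_item B m (IBr (D' ++ [x]) C) (IBr (W1 ++ [w]) C) -> ins_item B m (IBr D' C) (IBr W1 C).
Proof.
  intros H1 HE H3. pose proof (f_equal (@length _) HE) as HL. rewrite !erase_seq_length in HL.
  apply ins_br_inv in H1. apply ins_br_inv in H3.
  destruct H1 as [[Z [HZ HR]]|[SB [Z [HZ [HR Hn]]]]]; injection HZ as ->;
  destruct H3 as [[Z' [HZ' HR']]|[SB' [Z' [HZ' [HR' Hn']]]]]; injection HZ' as HZ'.
  - subst Z'. apply ins_seq_app_inv_length in HR'. destruct HR'. apply ins_br; auto.
    apply ins_seq_length in HR; lia.
  - exfalso. apply ins_seq_length in HR. apply ins_seq_length in HR'. apply (f_equal (@length _)) in HZ'.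
    repeat rewrite length_app in *. simpl in *. lia.
  - exfalso. apply ins_seq_length in HR. apply ins_seq_length in HR'. rewrite <- HZ' in HR'.
    repeat rewrite length_app in *. simpl in *. lia.
  - destruct W1 as [|y W1]. { simpl in HL. lia. }
    simpl in HZ'. injection HZ' as -> HZ'. subst Z'.
    apply ins_seq_app_inv_length in HR'. destruct HR'. apply ins_insert; auto.
    apply ins_seq_length in HR. simpl in HL. lia.
Qed.

Lemma ins_shape_mut B :
  (forall m x y, ins_item B m x y ->
    forall x1, erase_item x1 = erase_item x -> ins_item B m x1 (erase_item y)) /\
  (forall m l l', ins_seq B m l l' -> forall l1, erase_seq l1 = erase_seq l -> ins_seq B m l1 (erase_seq l')).
Proof.
  apply ins_mut; intros.
  1-5: destruct x1; cbn in H; try discriminate; injection H; intros; subst; constructor.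
  - rewrite erase_item_dia in H. destruct (erase_dia_inv _ _ H) as [S1 ->]. rewrite erase_item_dia.
    constructor. split; [intros _ []|intros _ []].
  - rewrite erase_item_br in H0. destruct (erase_br_inv _ _ _ H0) as [Z1 [-> HZ]].
    rewrite erase_item_br. constructor. auto.
  - rewrite erase_item_br in H0. destruct (erase_br_inv _ _ _ H0) as [Z1 [-> HZ]].
    rewrite erase_item_br, erase_seq_cons, erase_item_dia. apply ins_insert; auto.
    intro Hc; apply (has_br_erase_eq B Z1 Z HZ) in Hc; auto.
  - destruct l1; try discriminate. constructor.
  - destruct l1 as [|x1 l1]; try discriminate. rewrite !erase_seq_cons in H1. injection H1; intros.
    rewrite erase_seq_cons. constructor; auto.
Qed.

Lemma ins_seq_shape B m l l' l1 : ins_seq B m l l' -> erase_seq l1 = erase_seq l ->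
  ins_seq B m l1 (erase_seq l').
Proof. intros; eapply ins_shape_mut; eauto. Qed.

Lemma ins_seq_erase B m l l' : ins_seq B m l l' -> ins_seq B m l (erase_seq l').
Proof. intros; eapply ins_seq_shape; eauto. Qed.

Lemma ins_item_erase_refl B x : forall m, ins_item B m x (erase_item x).
Proof.
  induction x using item_forall_ind; intro m; try (constructor; fail).
  - constructor. split; intros _ [].
  - rewrite erase_item_br. constructor. induction H; constructor; auto.
Qed.

Lemma ins_seq_erase_refl B m l : ins_seq B m l (erase_seq l).
Proof. induction l; constructor; auto using ins_item_erase_refl. Qed.

(* [ins_ctx B g c c' gh r] relates contexts so that filling them with related sequents
   gives related sequents: [gh] is the guard at the hole, and [r] records whether an
   insertion happened on the path to the hole (then the filling must have no bracket
   annotated [B]). *)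
Inductive ins_ctx (B : formula) : guard -> ctx -> ctx -> guard -> bool -> Prop :=
| insc_top m G G' : ins_seq B m G G' -> ins_ctx B m (CTop G) (CTop G') m false
| insc_in m G G' c c' C mh r : ins_seq B m G G' -> ins_ctx B Unguarded c c' mh r ->
  ins_ctx B m (CIn G c C) (CIn G' c' C) mh r
| insc_insert m G G' c c' C mh r SB : ins_seq B m G G' -> ins_ctx B Guarded c c' mh r -> ctx_no_br B c ->
    ins_ctx B m (CIn G c C) (CIn G' (ctx_cons (IDia (dual B) SB) c') C) mh true.

Lemma ins_ctx_in_inv B m G c C c' mh r : ins_ctx B m (CIn G c C) c' mh r -> exists G', ins_seq B m G G' /\
  ((exists cc', c' = CIn G' cc' C /\ ins_ctx B Unguarded c cc' mh r) \/
   (exists cc' SB r', c' = CIn G' (ctx_cons (IDia (dual B) SB) cc') C /\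
      ins_ctx B Guarded c cc' mh r' /\ ctx_no_br B c /\ r = true)).
Proof. intro H; inversion H; subst; eexists; split; eauto. right; eauto 10. Qed.

Lemma ins_ctx_top_inv B m G c' mh r : ins_ctx B m (CTop G) c' mh r -> exists G', c' = CTop G' /\
  ins_seq B m G G' /\ mh = m /\ r = false.
Proof. intro H; inversion H; subst; eauto. Qed.

Lemma ins_ctx_fill B m c c' mh r P P' : ins_ctx B m c c' mh r -> ins_seq B mh P P' ->
  (r = true -> ~ has_br B P) ->
  ins_seq B m (fill c P) (fill c' P').
Proof. intros H; revert P P'; induction H; intros P P' HP Hr; cbn [fill].
  - apply ins_seq_app; auto.
  - apply ins_seq_app; auto. constructor; [|constructor]. apply ins_br. auto.
  - apply ins_seq_app; auto. rewrite fill_ctx_cons. constructor; [|constructor]. apply ins_insert; auto.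
    apply no_br_fill. auto. Qed.

Lemma ins_fill_inv B m c P Y : ins_seq B m (fill c P) Y -> exists c' P' mh r, Y = fill c' P' /\
  ins_ctx B m c c' mh r /\
  ins_seq B mh P P' /\ (r = true -> ~ has_br B P).
Proof. revert m Y; induction c; intros m Y H; cbn [fill] in H; apply ins_seq_app_inv in H;
  destruct H as [Y1 [Y2 [-> [H1 H2]]]].
  - exists (CTop Y1), Y2, m, false. repeat split; auto. constructor; auto. discriminate.
  - inversion H2; subst. inversion H6; subst. apply ins_br_inv in H4.
    destruct H4 as [[Z' [-> HZ]]|[SB [Z' [-> [HZ Hn]]]]].
    + destruct (IHc _ _ HZ) as [c' [P' [mh [r [-> [Hc [HP Hr]]]]]]].
      exists (CIn Y1 c' f), P', mh, r. repeat split; auto. constructor; auto.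
    + destruct (IHc _ _ HZ) as [c' [P' [mh [r [-> [Hc [HP Hr]]]]]]].
      apply no_br_fill in Hn. destruct Hn.
      exists (CIn Y1 (ctx_cons (IDia (dual B) SB) c') f), P', mh, true. repeat split; auto.
      * cbn [fill]. rewrite fill_ctx_cons. auto.
      * eapply insc_insert; eauto.
Qed.

Lemma ins_ctx_shape B m c c' mh r c1 : ins_ctx B m c c' mh r -> erase_ctx c1 = erase_ctx c ->
  ins_ctx B m c1 (erase_ctx c') mh r.
Proof. intros H; revert c1; induction H; intros c1 Hc; destruct c1; cbn in Hc; try discriminate;
  injection Hc; intros; subst; cbn [erase_ctx].
  - constructor. eapply ins_seq_shape; eauto.
  - constructor; auto. eapply ins_seq_shape; eauto.
  - rewrite erase_ctx_cons, erase_item_dia. eapply insc_insert; [eapply ins_seq_shape; eauto | eauto | ].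
    eapply ctx_no_br_erase; eauto. Qed.

Lemma ins_ctx_top_size B m c c' mh r : ins_ctx B m c c' mh r -> ctx_top_size c' = ctx_top_size c.
Proof. destruct 1; simpl; eapply ins_seq_length; eauto. Qed.

Lemma ins_ctx_fill_length B m c c0 mh r c1 P Q : ins_ctx B m c c0 mh r -> erase_ctx c1 = erase_ctx c0 ->
  length Q = length P ->
  length (fill c1 Q) = length (fill c P).
Proof. intros H Hc HQ. pose proof (ins_ctx_top_size _ _ _ _ _ _ H) as Ht.
pose proof (erase_ctx_top_size _ _ Hc) as Hc'.
  destruct H; destruct c1; cbn in Hc; try discriminate; try (destruct c'; cbn in Hc; discriminate);
  cbn [fill]; rewrite !length_app; cbn in *; lia. Qed.

Lemma ins_ctx_guarded_hole B m c c' mh r : ins_ctx B m c c' mh r -> mh = Guarded -> r = true \/ m = Guarded.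
Proof. induction 1; auto; intros; subst. destruct IHins_ctx; auto; discriminate. Qed.

Lemma ins_ctx_recover B m c c0 mh r c1 P Q : ins_ctx B m c c0 mh r -> ins_seq B m (fill c P) (fill c1 Q) ->
  erase_ctx c1 = erase_ctx c0 -> length Q = length P -> ins_ctx B m c c1 mh r /\ ins_seq B mh P Q.
Proof.
  intros Hc; revert c1; induction Hc; intros c1 Hf He HL.
  - destruct c1 as [G1|]; cbn in He; try discriminate. injection He as He.
    cbn [fill] in Hf. apply ins_seq_app_inv_length in Hf.
    + destruct Hf; split; [constructor; auto|auto].
    + rewrite <- (erase_seq_length G1), He, erase_seq_length. eapply ins_seq_length; eauto.
  - destruct c1 as [|G1 cc1 C1]; cbn in He; try discriminate. injection He as HG Hcc HC. subst C1.
    cbn [fill] in Hf. apply ins_seq_app_inv_length in Hf.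
    + destruct Hf as [HG1 HB]. inversion HB as [|? ? ? ? ? Hb Hnil]; subst. apply ins_br_inv in Hb.
      destruct Hb as [[Z' [HZ HZ']]|[SB [Z' [HZ [HZ' Hn]]]]].
      * injection HZ as HZ. subst Z'. destruct (IHHc _ HZ' Hcc HL). split; auto. constructor; auto.
      * injection HZ as HZ. exfalso. pose proof (ins_ctx_fill_length _ _ _ _ _ _ _ _ _ Hc Hcc HL) as E1.
        apply ins_seq_length in HZ'. rewrite HZ in E1. simpl in E1. lia.
    + rewrite <- (erase_seq_length G1), HG, erase_seq_length. eapply ins_seq_length; eauto.
  - destruct c1 as [|G1 cc1 C1]; cbn in He; try discriminate. injection He as HG Hcc HC. subst C1.
    destruct (erase_ctx_cons_inv _ _ _ Hcc) as [y [cc1' [-> [Hy Hcc']]]].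
    cbn [fill] in Hf. apply ins_seq_app_inv_length in Hf.
    + destruct Hf as [HG1 HB]. inversion HB as [|? ? ? ? ? Hb Hnil]; subst. rewrite fill_ctx_cons in Hb.
      apply ins_br_inv in Hb.
      destruct Hb as [[Z' [HZ HZ']]|[SB' [Z' [HZ [HZ' Hn]]]]].
      * injection HZ as HZ. exfalso. pose proof (ins_ctx_fill_length _ _ _ _ _ _ _ _ _ Hc Hcc' HL) as E1.
        apply ins_seq_length in HZ'. rewrite <- HZ in HZ'. simpl in HZ'. lia.
      * injection HZ as Hy' HZ. subst. destruct (IHHc _ HZ' Hcc' HL). split; auto.
        eapply insc_insert; eauto.
    + rewrite <- (erase_seq_length G1), HG, erase_seq_length. eapply ins_seq_length; eauto.
Qed.

Lemma ins_ctx_erase_refl B c : forall m, exists mh, ins_ctx B m c (erase_ctx c) mh false.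
Proof. induction c; intro m; cbn [erase_ctx].
  - exists m. constructor. apply ins_seq_erase_refl.
  - destruct (IHc Unguarded) as [mh H]. exists mh. constructor; auto. apply ins_seq_erase_refl. Qed.

Lemma merge_ins_mut B :
  (forall x1 x2 x, merge_item x1 x2 x ->
    forall m y1 y2, ins_item B m x1 y1 -> ins_item B m x2 y2 ->
    erase_item y1 = erase_item y2 -> exists z, merge_item y1 y2 z /\ ins_item B m x z /\
      erase_item z = erase_item y1) /\
  (forall l1 l2 l, merge_seq l1 l2 l -> forall m Y1 Y2, ins_seq B m l1 Y1 -> ins_seq B m l2 Y2 ->
    erase_seq Y1 = erase_seq Y2 -> exists Z, merge_seq Y1 Y2 Z /\ ins_seq B m l Z /\
      erase_seq Z = erase_seq Y1).
Proof.
  apply merge_mut; intros.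
  1-5: inversion H; inversion H0; subst; eexists; repeat split; constructor.
  - inversion H; inversion H0; subst. exists (IDia A (T ++ T0)). repeat split; try constructor.
    destruct H6 as [Ha1 Hb1], H11 as [Ha2 Hb2]. split.
    + intros x Hx. apply in_app_or in Hx. apply in_or_app. destruct Hx; auto.
    + intros Hm Hx. apply in_app_or in Hx. destruct Hx; [apply Hb1|apply Hb2]; auto.
  - pose proof (merge_seq_len _ _ _ m) as [L1 L2].
    apply ins_br_inv in H0. apply ins_br_inv in H1.
    destruct H0 as [[Z1 [-> HZ1]]|[SB1 [Z1 [-> [HZ1 Hn1]]]]];
    destruct H1 as [[Z2 [-> HZ2]]|[SB2 [Z2 [-> [HZ2 Hn2]]]]]; rewrite !erase_item_br in H2;
    injection H2 as H2; try rewrite !erase_seq_cons in H2.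
    2,3: exfalso; apply ins_seq_length in HZ1, HZ2; apply (f_equal (@length _)) in H2;
      cbn [length] in H2; rewrite !erase_seq_length in H2; lia.
    + destruct (H _ _ _ HZ1 HZ2 H2) as [Z [HM [HR HE]]]. exists (IBr Z B0). repeat split.
      * constructor; auto.
      * constructor; auto.
      * rewrite !erase_item_br. congruence.
    + destruct (H _ _ _ HZ1 HZ2 H2) as [Z [HM [HR HE]]].
      exists (IBr (IDia (dual B) (SB1 ++ SB2) :: Z) B0). repeat split.
      * constructor. constructor; auto. constructor.
      * apply ins_insert; auto. intro Hc. apply Hn1. apply (has_br_erase_eq B D1 D); auto.
        symmetry. apply (merge_seq_erase _ _ _ m).
      * rewrite !erase_item_br, !erase_seq_cons. rewrite !erase_item_dia. congruence.
  - inversion H; inversion H0; subst. exists []. repeat split; constructor.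
  - inversion H1; inversion H2; subst. rewrite !erase_seq_cons in H3. injection H3 as H3 H3'.
    destruct (H _ _ _ H7 H13 H3) as [z [Hz1 [Hz2 Hz3]]].
    destruct (H0 _ _ _ H9 H15 H3') as [Z [HZ1 [HZ2 HZ3]]].
    exists (z :: Z). repeat split; try constructor; auto. rewrite !erase_seq_cons. congruence.
Qed.

Lemma merge_ins_seq B m l1 l2 l Y1 Y2 : merge_seq l1 l2 l -> ins_seq B m l1 Y1 -> ins_seq B m l2 Y2 ->
    erase_seq Y1 = erase_seq Y2 -> exists Z, merge_seq Y1 Y2 Z /\ ins_seq B m l Z /\
      erase_seq Z = erase_seq Y1.
Proof. intros; eapply merge_ins_mut; eauto. Qed.

Lemma merge_ins_ctx B G1 G2 G : merge_ctx G1 G2 G -> forall m c1 c2 mh r1 r2, ins_ctx B m G1 c1 mh r1 ->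
  ins_ctx B m G2 c2 mh r2 ->
  erase_ctx c1 = erase_ctx c2 -> exists c, merge_ctx c1 c2 c /\ ins_ctx B m G c mh r1 /\
    erase_ctx c = erase_ctx c1.
Proof.
  induction 1; intros m c1' c2' mh r1 r2 H1 H2 He.
  - apply ins_ctx_top_inv in H1. apply ins_ctx_top_inv in H2.
    destruct H1 as [Y1 [-> [HY1 [-> ->]]]]. destruct H2 as [Y2 [-> [HY2 [_ ->]]]].
    cbn in He. injection He as He. destruct (merge_ins_seq _ _ _ _ _ _ _ H HY1 HY2 He) as [Z [HZ1 [HZ2 HZ3]]].
    exists (CTop Z). repeat split; try constructor; auto. cbn. congruence.
  - pose proof (merge_ctx_top_size _ _ _ H0) as Ht.
    apply ins_ctx_in_inv in H1. apply ins_ctx_in_inv in H2.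
    destruct H1 as [Y1 [HY1 [[cc1 [-> Hc1]]|[cc1 [SB1 [r1' [-> [Hc1 [Hn1 ->]]]]]]]]];
    destruct H2 as [Y2 [HY2 [[cc2 [-> Hc2]]|[cc2 [SB2 [r2' [-> [Hc2 [Hn2 ->]]]]]]]]];
    cbn in He; injection He as HeG Hec; try rewrite !erase_ctx_cons in Hec;
    destruct (merge_ins_seq _ _ _ _ _ _ _ H HY1 HY2 HeG) as [Z [HZ1 [HZ2 HZ3]]].
    + destruct (IHmerge_ctx _ _ _ _ _ _ Hc1 Hc2 Hec) as [cc [Hm [Hr He']]].
      exists (CIn Z cc B0). repeat split; try constructor; auto. cbn. congruence.
    + exfalso. rewrite <- erase_ctx_cons in Hec. apply erase_ctx_top_size in Hec.
      rewrite ctx_top_size_cons in Hec.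
      apply ins_ctx_top_size in Hc1. apply ins_ctx_top_size in Hc2. lia.
    + exfalso. rewrite <- erase_ctx_cons in Hec. apply erase_ctx_top_size in Hec.
      rewrite ctx_top_size_cons in Hec.
      apply ins_ctx_top_size in Hc1. apply ins_ctx_top_size in Hc2. lia.
    + apply ctx_cons_inj in Hec. destruct Hec as [_ Hec].
      destruct (IHmerge_ctx _ _ _ _ _ _ Hc1 Hc2 Hec) as [cc [Hm [Hr He']]].
      exists (CIn Z (ctx_cons (IDia (dual B) (SB1 ++ SB2)) cc) B0). repeat split.
      * constructor; auto. apply merge_ctx_cons; auto. constructor.
      * eapply insc_insert; eauto. apply (ctx_no_br_erase B c c1); auto. apply (merge_ctx_erase _ _ _ H0).
      * cbn. rewrite !erase_ctx_cons, !erase_item_dia. congruence.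
Qed.

(* Exchange is simulated in two steps: the target [y] is first transported back along
   [x1 ≡ x2]; then whatever relative [y1'] of [x1] is found, with the same shape, is
   transported forth again. *)
Definition transportable {X : Type} (ins : X -> X -> Prop) (erase : X -> X)
    (eqv : X -> X -> Prop) (x1 x2 : X) : Prop :=
  forall y, ins x2 y -> exists y1, ins x1 y1 /\
    forall y1', ins x1 y1' -> erase y1' = erase y1 ->
      exists y', ins x2 y' /\ erase y' = erase y /\ eqv y1' y'.

Lemma transportable_br B m Z1 Z2 C : seq_eq Z1 Z2 ->
  (forall m, transportable (ins_seq B m) erase_seq seq_eq Z1 Z2) ->
  transportable (ins_item B m) erase_item item_eq (IBr Z1 C) (IBr Z2 C).
Proof.
  intros HZ12 IH y Hy. apply ins_br_inv in Hy. destruct Hy as [[Z [-> HZ]]|[SB [Z [-> [HZ Hn]]]]].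
  - destruct (IH _ _ HZ) as [Z1' [HZ1 P]]. exists (IBr Z1' C). split; [constructor; auto|].
    intros y1' H1 H2. apply ins_br_inv in H1. rewrite !erase_item_br in H2.
    destruct H1 as [[W [-> HW]]|[SB' [W [-> [HW _]]]]]; rewrite ?erase_item_br in H2; injection H2 as H2.
    + destruct (P _ HW H2) as [Z' [HZ' [HE Heq]]]. exists (IBr Z' C). repeat split.
      * constructor; auto.
      * rewrite !erase_item_br; congruence.
      * constructor; auto.
    + exfalso. apply (f_equal (@length _)) in H2. cbn [length] in H2.
      rewrite !erase_seq_length in H2. apply ins_seq_length in HZ1. apply ins_seq_length in HW. lia.
  - destruct (IH _ _ HZ) as [Z1' [HZ1 P]]. exists (IBr (IDia (dual B) SB :: Z1') C). split.
    + apply ins_insert; auto. rewrite (seq_eq_br B _ _ HZ12). exact Hn.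
    + intros y1' H1 H2. apply ins_br_inv in H1. rewrite !erase_item_br in H2.
      destruct H1 as [[W [-> HW]]|[SB' [W [-> [HW Hn']]]]]; rewrite ?erase_item_br in H2; injection H2 as H2.
      * exfalso. apply (f_equal (@length _)) in H2. cbn [length] in H2.
        rewrite !erase_seq_length in H2. apply ins_seq_length in HZ1. apply ins_seq_length in HW. lia.
      * destruct (P _ HW H2) as [Z' [HZ' [HE Heq]]]. exists (IBr (IDia (dual B) SB' :: Z') C). repeat split.
        -- apply ins_insert; auto.
        -- rewrite !erase_item_br, !erase_seq_cons, !erase_item_dia; congruence.
        -- repeat constructor; auto.
Qed.

Lemma ins_transportable_mut B :
  (forall i1 i2, item_eq i1 i2 -> forall m, transportable (ins_item B m) erase_item item_eq i1 i2) /\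
  (forall D1 D2, seq_eq D1 D2 -> forall m, transportable (ins_seq B m) erase_seq seq_eq D1 D2).
Proof.
  apply eq_mut; intros; try (apply transportable_br; assumption); intros Y HY.
  - exists Y; split; auto. intros y1' H1 H2. exists y1'; repeat split; auto. constructor.
  - destruct (ins_dia_inv _ _ _ _ _ HY) as [T [-> [Ha Hb]]]. exists (IDia A T). split.
    + constructor. split; auto. intros x Hx; apply i; auto.
    + intros y1' H1 _. destruct (ins_dia_inv _ _ _ _ _ H1) as [T' [-> [Ha' Hb']]].
      exists (IDia A T'); repeat split; try constructor. split; auto. intros x Hx; apply i; auto.
  - inversion HY; subst. exists []. split; [constructor|]. intros Y1' H1 H2. inversion H1; subst.
    exists []; repeat split; constructor.
  - inversion HY as [|? ? ? ? ? Hy HYs]; subst.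
    destruct (H _ _ Hy) as [y1 [Hy1 P1]]. destruct (H0 _ _ HYs) as [Ys1 [HYs1 P2]].
    exists (y1 :: Ys1). split; [constructor; auto|]. intros Y1' H2 H3.
    inversion H2 as [|? ? ? ? ? Hz HZs]; subst.
    rewrite !erase_seq_cons in H3. injection H3 as H3 H3'.
    destruct (P1 _ Hz H3) as [y' [Hy' [He' Hq']]]. destruct (P2 _ HZs H3') as [Ys' [HYs' [HE' HQ']]].
    exists (y' :: Ys'). repeat split; try constructor; auto. rewrite !erase_seq_cons; congruence.
  - destruct (ins_seq_cons_inv _ _ _ _ _ HY) as [yj [Y' [-> [Hj H']]]].
    destruct (ins_seq_cons_inv _ _ _ _ _ H') as [yi [ys [-> [Hi Hys]]]].
    exists (yi :: yj :: ys). split; [repeat constructor; auto|].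
    intros Y1' H1 H2. destruct (ins_seq_cons_inv _ _ _ _ _ H1) as [a [Y1'' [-> [Ha H1']]]].
    destruct (ins_seq_cons_inv _ _ _ _ _ H1') as [b [c [-> [Hb Hc]]]].
    rewrite !erase_seq_cons in H2. injection H2 as E1 E2 E3.
    exists (b :: a :: c). repeat split; try (repeat constructor; auto; fail).
    rewrite !erase_seq_cons; congruence.
  - destruct (H0 _ _ HY) as [Y2 [HY2 P23]]. destruct (H _ _ HY2) as [Y1 [HY1 P12]].
    exists Y1. split; auto. intros Y1' H2 H3. destruct (P12 _ H2 H3) as [Y2' [HY2' [HE2 Hq2]]].
    destruct (P23 _ HY2' HE2) as [Y' [HY' [HE Hq]]]. exists Y'. repeat split; auto. econstructor; eauto.
Qed.

Lemma ins_seq_transportable B m D1 D2 :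
  seq_eq D1 D2 -> transportable (ins_seq B m) erase_seq seq_eq D1 D2.
Proof. intro H. apply (proj2 (ins_transportable_mut B)); exact H. Qed.
(* The box rule, the diamond rule into the new bracket and an identity expansion of [B]. *)
Lemma der_box_beside_dia A0 B H c :
  der A0 (fill (erase_ctx H) (IDia (dual B) [B] :: fill (erase_ctx c) [IBox B])).
Proof.
  destruct (expands_all A0 B (ctx_comp H (ctx_cons (IDia (dual B) [])
      (ctx_comp c (CIn [] (CTop [IDia (dual B) []]) B))))) as [Sb [Sd Hid]].
  rewrite erase_ctx_comp, fill_ctx_comp, erase_ctx_cons, fill_ctx_cons, erase_ctx_comp, fill_ctx_comp in Hid.
  cbn [erase_ctx erase_seq map erase_item fill app] in Hid.
  rewrite <- fill_ctx_cons, <- fill_ctx_comp.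
  apply (d_box _ _ B [] Sb). rewrite fill_ctx_comp, fill_ctx_cons.
  apply (der_perm_fill _ _ (fill (erase_ctx c) [IBr [IDia (dual B) []; mk B Sb] B] ++ [IDia (dual B) [B]])).
  { apply Permutation_sym, Permutation_cons_append. }
  apply (d_dia _ (erase_ctx H) (erase_ctx c) [IDia (dual B) []; mk B Sb] (dual B) B [] Sd).
  eapply der_perm_fill; [apply Permutation_cons_append | exact Hid].
Qed.

Lemma der_box_inserted A0 B m c c' mh r : ins_ctx B m c c' mh r -> r = true ->
  exists c'', erase_ctx c'' = erase_ctx c' /\
  ins_ctx B m c c'' mh true /\ forall Hz, der A0 (fill (erase_ctx Hz) (fill c'' [IBox B])).
Proof.
  induction 1; intro Hr; try discriminate.
  - subst r. destruct (IHins_ctx eq_refl) as [cc [He [Hc Hd]]].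
    exists (CIn (erase_seq G') cc C). repeat split.
    + cbn. rewrite erase_seq_idem, He. auto.
    + constructor; auto. apply ins_seq_erase; auto.
    + intro Hz. specialize (Hd (ctx_comp Hz (CIn G' (CTop []) C))).
      rewrite erase_ctx_comp, fill_ctx_comp in Hd.
      exact Hd.
  - exists (CIn (erase_seq G') (ctx_cons (IDia (dual B) [B]) (erase_ctx c')) C). repeat split.
    + cbn. rewrite erase_seq_idem, !erase_ctx_cons, erase_ctx_idem, !erase_item_dia. auto.
    + eapply insc_insert; eauto. apply ins_seq_erase; auto. eapply ins_ctx_shape; eauto.
    + intro Hz. pose proof (der_box_beside_dia A0 B (ctx_comp Hz (CIn G' (CTop []) C)) c') as Hd.
      rewrite erase_ctx_comp, fill_ctx_comp in Hd. cbn [fill erase_ctx app] in Hd |- *.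
      rewrite fill_ctx_cons. exact Hd.
Qed.

Lemma ins_dia_rule_conclusion B m D d' d1 D' W W1 A B0 S S' S'' T1 mh r :
  ins_ctx B m D d' mh r -> ins_item B mh (IBr D' B0) (IBr W B0) -> (r = true -> ~ has_br B [IBr D' B0]) ->
  erase_ctx d1 = erase_ctx d' -> erase_seq W1 = erase_seq W ->
  ins_seq B m (fill D [IBr (D' ++ [mk A S']) B0] ++ [IDia A S])
    (fill d1 [IBr (W1 ++ [mk A S'']) B0] ++ [IDia A T1]) ->
  (m = Guarded -> B0 <> B) ->
  ins_seq B m (fill D [IBr D' B0] ++ [IDia A (B0 :: S)]) (fill d1 [IBr W1 B0] ++ [IDia A (B0 :: T1)]).
Proof.
  intros Hd Hq Hr Hd1e HW1 HRl HB0.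
  apply ins_seq_app_inv_length in HRl.
  2:{ apply (ins_ctx_fill_length _ _ _ _ _ _ _ _ _ Hd Hd1e). reflexivity. }
  destruct HRl as [HRa HRb].
  destruct (ins_ctx_recover _ _ _ _ _ _ _ _ _ Hd HRa Hd1e eq_refl) as [Hd1 HRc].
  inversion HRc as [|? ? ? ? ? Hq' _]; subst.
  pose proof (ins_br_snoc_inv _ _ _ _ _ _ _ _ Hq HW1 Hq') as Hq''.
  inversion HRb as [|? ? ? ? ? Hdd _]; subst.
  destruct (ins_dia_inv _ _ _ _ _ Hdd) as [T1' [E' [Ha1 Hb1]]]. injection E' as <-.
  apply ins_seq_app.
  - apply (ins_ctx_fill _ _ _ _ _ _ _ _ Hd1); [constructor; [exact Hq''|constructor] | exact Hr].
  - constructor; [|constructor]. constructor. split.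
    + intros x [<-|Hx]; [left|right]; auto.
    + intros Hm [E|Hx]; [exact (HB0 Hm E) | exact (Hb1 Hm Hx)].
Qed.

Definition simulates A0 B X :=
  forall Y, ins_seq B Unguarded X Y ->
    exists Y', ins_seq B Unguarded X Y' /\ erase_seq Y' = erase_seq Y /\ der A0 Y'.

Lemma simulates_fill A0 B G P1 c' mh r Q1 : simulates A0 B (fill G P1) -> ins_ctx B Unguarded G c' mh r ->
  ins_seq B mh P1 Q1 ->
  (r = true -> ~ has_br B P1) -> exists c1 Q1', der A0 (fill c1 Q1') /\ erase_ctx c1 = erase_ctx c' /\
  erase_seq Q1' = erase_seq Q1 /\ ins_ctx B Unguarded G c1 mh r /\ ins_seq B mh P1 Q1'.
Proof.
  intros IH Hc HP Hr. destruct (IH _ (ins_ctx_fill _ _ _ _ _ _ _ _ Hc HP Hr)) as [Y' [HY' [HE HD]]].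
  rewrite erase_fill in HE. rewrite <- erase_fill in HE.
  destruct (erase_fill_inv _ _ _ HE) as [c1 [Q [-> [Hc1 HQ]]]].
  destruct (ins_ctx_recover _ _ _ _ _ _ _ _ _ Hc HY' Hc1) as [Hc2 HP2].
  - rewrite <- (erase_seq_length Q), HQ, erase_seq_length. eapply ins_seq_length; eauto.
  - exists c1, Q. repeat split; auto.
Qed.

Lemma simulates_fill_shape A0 B G1 G P1 c' mh r Q1 : simulates A0 B (fill G1 P1) ->
  ins_ctx B Unguarded G c' mh r -> erase_ctx G1 = erase_ctx G ->
  ins_seq B mh P1 Q1 -> (r = true -> ~ has_br B P1) -> exists c1 Q1', der A0 (fill c1 Q1') /\
    erase_ctx c1 = erase_ctx c' /\
  erase_seq Q1' = erase_seq Q1 /\ ins_ctx B Unguarded G1 c1 mh r /\ ins_seq B mh P1 Q1'.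
Proof.
  intros IH Hc HG HP Hr. pose proof (ins_ctx_shape _ _ _ _ _ _ _ Hc HG) as Hc'.
  destruct (simulates_fill _ _ _ _ _ _ _ _ IH Hc' HP Hr) as [c1 [Q [H1 [H2 H3]]]].
  exists c1, Q. rewrite erase_ctx_idem in H2. auto.
Qed.

Lemma simulates_id A0 B G n : simulates A0 B (fill G [INAtom n; IAtom n]).
Proof.
  intros Y HY.
  destruct (ins_fill_inv _ _ _ _ _ HY) as [c' [P' [mh [r [-> [Hc [HP Hr]]]]]]].
  inversion HP as [|? ? ? ? ? Hx1 HP1]; subst. inversion HP1 as [|? ? ? ? ? Hx2 HP2]; subst.
  inversion HP2; subst. apply ins_item_plain in Hx1. apply ins_item_plain in Hx2. subst.
  exists (erase_seq (fill c' [INAtom n; IAtom n])). repeat split.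
  - apply ins_seq_erase. auto.
  - apply erase_seq_idem.
  - pose proof (all_empty_erase (fill c' [INAtom n; IAtom n])) as Hae.
    rewrite erase_fill in Hae |- *. apply d_id. exact Hae.
Qed.

Lemma simulates_and A0 B G1 G2 G A B0 S1 S2 : merge_ctx G1 G2 G ->
  simulates A0 B (fill G1 [mk A S1]) -> simulates A0 B (fill G2 [mk B0 S2]) ->
  simulates A0 B (fill G [IAnd A B0]).
Proof.
  intros H IH1 IH2 Y HY.
  destruct (ins_fill_inv _ _ _ _ _ HY) as [c' [P' [mh [r [-> [Hc [HP Hr]]]]]]].
  inversion HP as [|? ? ? ? ? Hx1 HP1]; subst. inversion HP1; subst. apply ins_item_plain in Hx1. subst.
  destruct (merge_ctx_erase _ _ _ H) as [E1 E2].
  destruct (simulates_fill_shape _ _ _ _ _ _ _ _ [mk A []] IH1 Hc (eq_sym E1) (ins_seq_mk _ _ _ _))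
    as [c1 [Q1 [D1 [Hc1 [HQ1 [HR1 _]]]]]].
  { intros _; apply no_br_single_mk. }
  destruct (simulates_fill_shape _ _ _ _ _ _ _ _ [mk B0 []] IH2 Hc
                (eq_trans E2 (eq_sym E1)) (ins_seq_mk _ _ _ _))
    as [c2 [Q2 [D2 [Hc2 [HQ2 [HR2 _]]]]]].
  { intros _; apply no_br_single_mk. }
  destruct (erase_single_mk_inv _ _ _ HQ1) as [T1 ->]. destruct (erase_single_mk_inv _ _ _ HQ2) as [T2 ->].
  destruct (merge_ins_ctx _ _ _ _ H _ _ _ _ _ _ HR1 HR2 (eq_trans Hc1 (eq_sym Hc2))) as [c [Hm [HRc Hec]]].
  exists (fill c [IAnd A B0]). repeat split.
  - apply (ins_ctx_fill _ _ _ _ _ _ _ _ HRc); [repeat constructor|].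
    intros _. exact (no_br_single_mk B (And A B0) []).
  - rewrite !erase_fill. congruence.
  - eapply d_and; eauto.
Qed.

Lemma simulates_or A0 B G A B0 S1 S2 : simulates A0 B (fill G [mk A S1; mk B0 S2]) ->
  simulates A0 B (fill G [IOr A B0]).
Proof.
  intros IH Y HY.
  destruct (ins_fill_inv _ _ _ _ _ HY) as [c' [P' [mh [r [-> [Hc [HP Hr]]]]]]].
  inversion HP as [|? ? ? ? ? Hx1 HP1]; subst. inversion HP1; subst. apply ins_item_plain in Hx1. subst.
  destruct (simulates_fill _ _ _ [mk A S1; mk B0 S2] _ _ _ [mk A []; mk B0 []] IH Hc)
    as [c1 [Q1 [D1 [Hc1 [HQ1 [HR1 _]]]]]].
  { apply (ins_seq_app _ _ [_] [_] [_] [_]); apply ins_seq_mk. }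
  { intros _ Hh. apply (has_br_app _ [_] [_]) in Hh. destruct Hh; eapply no_br_single_mk; eauto. }
  apply (erase_seq_app_inv _ [_] [_]) in HQ1. destruct HQ1 as [Qa [Qb [-> [Ha Hb]]]].
  destruct (erase_single_mk_inv _ _ _ Ha) as [T1 ->]. destruct (erase_single_mk_inv _ _ _ Hb) as [T2 ->].
  exists (fill c1 [IOr A B0]). repeat split.
  - apply (ins_ctx_fill _ _ _ _ _ _ _ _ HR1); [repeat constructor|].
    intros _. exact (no_br_single_mk B (Or A B0) []).
  - rewrite !erase_fill. congruence.
  - apply (d_or _ _ _ _ T1 T2). exact D1.
Qed.

Lemma simulates_box A0 B G A S S' : simulates A0 B (fill G [IBr [IDia (dual A) S; mk A S'] A]) ->
  simulates A0 B (fill G [IBox A]).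
Proof.
  intros IH Y HY.
  destruct (ins_fill_inv _ _ _ _ _ HY) as [c' [P' [mh [r [-> [Hc [HP Hr]]]]]]].
  inversion HP as [|? ? ? ? ? Hx1 HP1]; subst. inversion HP1; subst. apply ins_item_plain in Hx1. subst.
  assert (Hgen : (r = true -> A <> B) -> exists Y', ins_seq B Unguarded (fill G [IBox A]) Y' /\
      erase_seq Y' = erase_seq (fill c' [IBox A]) /\ der A0 Y').
  { intro HAB.
    destruct (simulates_fill _ _ _ [IBr [IDia (dual A) S; mk A S'] A] _ _ _
                [IBr [IDia (dual A) []; mk A []] A] IH Hc)
      as [c1 [Q1 [D1 [Hc1 [HQ1 [HR1 _]]]]]].
    { constructor; [|constructor]. apply ins_br. constructor.
      - constructor. split; intros _ [].
      - apply ins_seq_mk. }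
    { intros Hrt Hh. apply has_br_cons in Hh. destruct Hh as [Hh|Hh]; [|apply (has_br_nil _ Hh)].
      apply item_has_br_br in Hh. destruct Hh as [Hh|Hh]; [apply (HAB Hrt); auto|].
      apply has_br_cons in Hh. destruct Hh as [[]|Hh]. apply (no_br_single_mk _ _ _ Hh). }
    destruct (erase_single_br_inv _ _ _ HQ1) as [W [-> HW]].
    destruct (erase_dia_mk_inv _ _ _ _ _ HW) as [T [T' ->]].
    exists (fill c1 [IBox A]). repeat split.
    - apply (ins_ctx_fill _ _ _ _ _ _ _ _ HR1); [repeat constructor|].
      intros _. exact (no_br_single_mk B (Box A) []).
    - rewrite !erase_fill. congruence.
    - eapply d_box. exact D1. }
  (* A box rule for [□B] inside an insertion cannot be copied; [□B] is derived afresh. *)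
  destruct r; [destruct (formula_eq_dec A B) as [EAB|NAB]|].
  - subst A. destruct (der_box_inserted A0 _ _ _ _ _ _ Hc eq_refl) as [c'' [He [Hc'' Hd]]].
    exists (fill c'' [IBox B]). repeat split.
    + apply (ins_ctx_fill _ _ _ _ _ _ _ _ Hc''); [repeat constructor|].
      intros _. exact (no_br_single_mk B (Box B) []).
    + rewrite !erase_fill. congruence.
    + exact (Hd (CTop [])).
  - apply Hgen; auto.
  - apply Hgen; discriminate.
Qed.

Lemma simulates_dia A0 B G D D' A B0 S S' :
  simulates A0 B (fill G (fill D [IBr (D' ++ [mk A S']) B0] ++ [IDia A S])) ->
  simulates A0 B (fill G (fill D [IBr D' B0] ++ [IDia A (B0 :: S)])).
Proof.
  intros IH Y HY.
  destruct (ins_fill_inv _ _ _ _ _ HY) as [c' [P' [mh [r [-> [Hc [HP Hr]]]]]]].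
  apply ins_seq_app_inv in HP. destruct HP as [P1' [P2' [-> [HP1 HP2]]]].
  inversion HP2 as [|? ? y ? ? Hy HP3]; subst. inversion HP3; subst.
  destruct (ins_dia_inv _ _ _ _ _ Hy) as [T [-> HaT]].
  destruct (ins_fill_inv _ _ _ _ _ HP1) as [d' [Q' [mh2 [r2 [-> [Hd [HQ Hr2]]]]]]].
  inversion HQ as [|? ? q ? ? Hq HQ2]; subst. inversion HQ2; subst.
  destruct (ins_br_shape _ _ _ _ _ Hq) as [W ->].
  destruct (simulates_fill _ _ _ (fill D [IBr (D' ++ [mk A S']) B0] ++ [IDia A S]) _ _ _
    (fill d' [IBr (W ++ [mk A []]) B0] ++ [IDia A []]) IH Hc) as [c1 [Q1 [D1 [Hc1 [HQ1 [HR1 HRl]]]]]].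
  { apply ins_seq_app.
    - apply (ins_ctx_fill _ _ _ _ _ _ _ _ Hd).
      + constructor; [|constructor]. apply ins_br_snoc. auto.
      + intro Hrt. apply no_br_br_snoc. auto.
    - constructor; [|constructor]. constructor. split; [intros _ []|intros _ []]. }
  { intro Hrt. eapply no_br_dia_premise. apply Hr; auto. }
  rewrite erase_seq_app in HQ1. apply erase_seq_app_inv in HQ1. destruct HQ1 as [R11 [R12 [-> [HR11 HR12]]]].
  destruct (erase_single_mk_inv _ (Dia A) [] HR12) as [T1 ->].
  destruct (erase_fill_inv _ _ _ HR11) as [d1 [R3 [-> [Hd1e HR3]]]].
  destruct (erase_single_br_inv _ _ _ HR3) as [W' [-> HW']].
  rewrite erase_seq_app in HW'. apply erase_seq_app_inv in HW'. destruct HW' as [W1 [Wb [-> [HW1 HWb]]]].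
  destruct (erase_single_mk_inv _ _ _ HWb) as [S'' ->].
  exists (fill c1 (fill d1 [IBr W1 B0] ++ [IDia A (B0 :: T1)])). repeat split.
  + apply (ins_ctx_fill _ _ _ _ _ _ _ _ HR1); [|exact Hr].
    apply (ins_dia_rule_conclusion _ _ _ _ _ _ _ _ _ _ _ _ _ _ _ _ Hd Hq Hr2 Hd1e HW1 HRl).
    intros Hm E. destruct (ins_ctx_guarded_hole _ _ _ _ _ _ Hc Hm) as [Hrt|Hbad]; [|discriminate].
    apply (Hr Hrt). apply has_br_app. left. apply fill_has_br.
    apply has_br_cons. left. apply item_has_br_br. left. exact E.
  + rewrite !erase_fill, !erase_seq_app, !erase_fill, Hc1, Hd1e, !erase_seq_cons, !erase_item_br, HW1.
    reflexivity.
  + apply (d_dia _ c1 d1 W1 A B0 T1 S''). exact D1.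
Qed.

Lemma simulates_cut A0 B G1 G2 G S1 S2 : merge_ctx G1 G2 G ->
  simulates A0 B (fill G1 [mk A0 S1]) -> simulates A0 B (fill G2 [mk (dual A0) S2]) ->
  simulates A0 B (fill G []).
Proof.
  intros H IH1 IH2 Y HY.
  destruct (ins_fill_inv _ _ _ _ _ HY) as [c' [P' [mh [r [-> [Hc [HP Hr]]]]]]].
  inversion HP; subst.
  destruct (merge_ctx_erase _ _ _ H) as [E1 E2].
  destruct (simulates_fill_shape _ _ _ _ _ _ _ _ [mk A0 []] IH1 Hc (eq_sym E1) (ins_seq_mk _ _ _ _))
    as [c1 [Q1 [D1 [Hc1 [HQ1 [HR1 _]]]]]].
  { intros _; apply no_br_single_mk. }
  destruct (simulates_fill_shape _ _ _ _ _ _ _ _ [mk (dual A0) []] IH2 Hc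
                (eq_trans E2 (eq_sym E1)) (ins_seq_mk _ _ _ _))
    as [c2 [Q2 [D2 [Hc2 [HQ2 [HR2 _]]]]]].
  { intros _; apply no_br_single_mk. }
  destruct (erase_single_mk_inv _ _ _ HQ1) as [T1 ->]. destruct (erase_single_mk_inv _ _ _ HQ2) as [T2 ->].
  destruct (merge_ins_ctx _ _ _ _ H _ _ _ _ _ _ HR1 HR2 (eq_trans Hc1 (eq_sym Hc2))) as [c [Hm [HRc Hec]]].
  exists (fill c []). repeat split.
  - apply (ins_ctx_fill _ _ _ _ _ _ _ _ HRc); [constructor|]. intros _ Hh. apply (has_br_nil _ Hh).
  - rewrite !erase_fill. congruence.
  - eapply d_cut; eauto.
Qed.

Lemma simulates_exch A0 B D1 D2 : seq_eq D1 D2 -> simulates A0 B D1 -> simulates A0 B D2.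
Proof.
  intros H IH Y HY.
  destruct (ins_seq_transportable B Unguarded _ _ H _ HY) as [Y1 [HY1 P]].
  destruct (IH _ HY1) as [Y1' [HY1' [HE HD]]].
  destruct (P _ HY1' HE) as [Y' [HY' [HE' Hq]]].
  exists Y'. repeat split; auto. eapply d_exch; eauto.
Qed.

Lemma der_simulates A0 B X : der A0 X -> simulates A0 B X.
Proof.
  induction 1.
  - apply simulates_id.
  - eapply simulates_and; eauto.
  - eapply simulates_or; eauto.
  - eapply simulates_box; eauto.
  - eapply simulates_dia; eauto.
  - eapply simulates_cut; eauto.
  - eapply simulates_exch; eauto.
Qed.

Lemma der_insert_dia A0 B G L C : der A0 (fill G [IBr L C]) -> ~ has_br B L ->
  exists G' SB L', erase_ctx G' = erase_ctx G /\ erase_seq L' = erase_seq L /\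
    ins_seq B Guarded L L' /\ der A0 (fill G' [IBr (IDia (dual B) SB :: L') C]).
Proof.
  intros HD Hn.
  destruct (ins_ctx_erase_refl B G Unguarded) as [mh Hc].
  assert (HP : ins_seq B mh [IBr L C] [IBr (IDia (dual B) [] :: erase_seq L) C]).
  { constructor; [|constructor]. apply ins_insert; [apply ins_seq_erase_refl | exact Hn]. }
  pose proof (ins_ctx_fill _ _ _ _ _ _ _ _ Hc HP (fun E => ltac:(discriminate E))) as HX.
  destruct (der_simulates _ _ _ HD _ HX) as [Y' [HY' [HE HD']]].
  rewrite erase_fill, <- erase_fill in HE.
  destruct (erase_fill_inv _ _ _ HE) as [c1 [Q [-> [Hc1 HQ]]]].
  destruct (erase_single_br_inv _ _ _ HQ) as [W [-> HW]].
  rewrite erase_ctx_idem in Hc1.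
  destruct (ins_ctx_recover _ _ _ _ _ _ _ _ _ Hc HY' (eq_trans Hc1 (eq_sym (erase_ctx_idem G))) eq_refl)
    as [_ HR].
  inversion HR as [|? ? ? ? ? Hq _]; subst. apply ins_br_inv in Hq.
  destruct Hq as [[Z [HZ HRZ]]|[SB [Z [HZ [HRZ _]]]]]; injection HZ as HZ; subst W.
  - exfalso. apply ins_seq_length in HRZ. apply (f_equal (@length _)) in HW.
    rewrite !erase_seq_length in HW. simpl in HW. rewrite erase_seq_length in HW. lia.
  - exists c1, SB, Z. repeat split; auto.
    rewrite !erase_seq_cons, erase_seq_idem in HW. injection HW as HW. exact HW.
Qed.

Theorem mainTheorem7 (A : formula) (G : ctx) (D : sequent) (Sigma : annot)
    (C : formula) (B : formula) :
  der A (fill G [IBr (IDia (dual A) Sigma :: D) C]) ->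
  In B Sigma ->
  ~ has_br B D ->
  exists (G' : ctx) (D' : sequent) (Sigma' SB : annot),
    erase_ctx G' = erase_ctx G /\ erase_seq D' = erase_seq D /\
    (forall x, In x Sigma' -> In x Sigma /\ x <> B) /\
    der A (fill G' [IBr (IDia (dual A) Sigma' :: IDia (dual B) SB :: D') C]).
Proof.
  intros HD _ Hn.
  destruct (der_insert_dia A B G (IDia (dual A) Sigma :: D) C HD) as [G' [SB [L' [HG [HL [HR HD']]]]]].
  { rewrite has_br_cons. simpl. tauto. }
  destruct (ins_seq_cons_inv _ _ _ _ _ HR) as [y [D' [-> [Hy _]]]].
  destruct (ins_dia_inv _ _ _ _ _ Hy) as [Sigma' [-> [Hsub HB]]].
  exists G', D', Sigma', SB. repeat split; auto.
  - rewrite !erase_seq_cons in HL. injection HL as HL. exact HL.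
  - intros ->. exact (HB eq_refl H).
  - eapply d_exch; [|exact HD']. apply seq_eq_fill. apply se_cons; [apply ie_br, se_swap | apply se_nil].
Qed.
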